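(* With the notation of the context, $H\varepsilon\cdot\lambda^*M\cdot S\lambda=\lambda S\cdot M\lambda^*\cdot\varepsilon H:SMH\to HMS$.
   Context: $\mathcal A$ is cocomplete, $H$ is an endofunctor, $(M,\eta)$ is a pointed endofunctor (a functor with natural transformation $\eta:\mathrm{Id}\to M$), and $\lambda:MH\to HM$ is a natural transformation with $\lambda\cdot\eta H=H\eta$. $M^n$ is the $n$-fold composite. $S$ is the colimit (computed objectwise) of the diagram consisting of all $M^n$ and all natural transformations $M^i\eta M^j:M^{i+j}\to M^{i+1+j}$, with injections $\mathrm{in}^n:M^n\to S$ (so $SG$ is the colimit with injections $\mathrm{in}^nG$ for any endofunctor $G$). Let $\varepsilon:SM\to MS$ be determined by $\varepsilon\cdot\mathrm{in}^nM=M\mathrm{in}^n$. Define $\lambda^0=\mathrm{id}_H$, $\lambda^{n+1}=\lambda M^n\cdot M\lambda^n:M^{n+1}H\to HM^{n+1}$, and let $\lambda^*:SH\to HS$ be determined by $\lambda^*\cdot\mathrm{in}^nH=H\mathrm{in}^n\cdot\lambda^n$ for all $n$. *)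

From Stdlib Require Import Arith.

Record Category := {
  Ob : Type;
  Hom : Ob -> Ob -> Type;
  idm : forall a, Hom a a;
  comp : forall a b c, Hom b c -> Hom a b -> Hom a c;
  comp_id_l : forall a b (f : Hom a b), comp a b b (idm b) f = f;
  comp_id_r : forall a b (f : Hom a b), comp a a b f (idm a) = f;
  comp_assoc : forall a b c d (h : Hom c d) (g : Hom b c) (f : Hom a b),
      comp a c d h (comp a b c g f) = comp a b d (comp b c d h g) f
}.
Arguments Hom {_} a b.
Arguments idm {_} a.
Arguments comp {_ a b c} g f.
Notation "g ⊚ f" := (comp g f) (at level 40, left associativity).

Record SmallCategory := {
  sOb : Set;
  sHom : sOb -> sOb -> Set;
  sidm : forall a, sHom a a;
  scomp : forall a b c, sHom b c -> sHom a b -> sHom a c;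
  scomp_id_l : forall a b (f : sHom a b), scomp a b b (sidm b) f = f;
  scomp_id_r : forall a b (f : sHom a b), scomp a a b f (sidm a) = f;
  scomp_assoc : forall a b c d (h : sHom c d) (g : sHom b c) (f : sHom a b),
      scomp a c d h (scomp a b c g f) = scomp a b d (scomp b c d h g) f
}.
Arguments sHom {_} a b.
Arguments sidm {_} a.
Arguments scomp {_ a b c} g f.

Record Diagram (J : SmallCategory) (A : Category) := {
  dobj : sOb J -> Ob A;
  dmap : forall i j, sHom i j -> Hom (dobj i) (dobj j);
  dmap_id : forall i, dmap i i (sidm i) = idm (dobj i);
  dmap_comp : forall i j k (g : sHom j k) (f : sHom i j),
      dmap i k (scomp g f) = dmap j k g ⊚ dmap i j f
}.
Arguments dobj {J A} _ i.
Arguments dmap {J A} _ {i j} u.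

Definition is_colimit {J : SmallCategory} {A : Category} (D : Diagram J A)
    (L : Ob A) (inj : forall i, Hom (dobj D i) L) : Prop :=
  (forall i j (u : sHom i j), inj j ⊚ dmap D u = inj i) /\
  (forall (Y : Ob A) (f : forall i, Hom (dobj D i) Y),
      (forall i j (u : sHom i j), f j ⊚ dmap D u = f i) ->
      exists! h : Hom L Y, forall i, h ⊚ inj i = f i).

Definition cocomplete (A : Category) : Prop :=
  forall (J : SmallCategory) (D : Diagram J A),
    exists (L : Ob A) (inj : forall i, Hom (dobj D i) L), is_colimit D L inj.

Record Endo (A : Category) := {
  fobj : Ob A -> Ob A;
  fmap : forall a b, Hom a b -> Hom (fobj a) (fobj b);
  fmap_id : forall a, fmap a a (idm a) = idm (fobj a);
  fmap_comp : forall a b c (g : Hom b c) (f : Hom a b),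
      fmap a c (g ⊚ f) = fmap b c g ⊚ fmap a b f
}.
Arguments fobj {A} _ a.
Arguments fmap {A} _ {a b} f.

Section Powers.
Context {A : Category} (M : Endo A).

Fixpoint Mpo (n : nat) (X : Ob A) : Ob A :=
  match n with 0 => X | S n => fobj M (Mpo n X) end.

Fixpoint Mpm (n : nat) {X Y : Ob A} (f : Hom X Y) : Hom (Mpo n X) (Mpo n Y) :=
  match n return Hom (Mpo n X) (Mpo n Y) with
  | 0 => f
  | S n => fmap M (Mpm n f)
  end.

(** The component at X of M^i eta M^j : M^(i+j) -> M^(i+1+j). *)
Fixpoint dmor (eta : forall X, Hom X (fobj M X)) (i j : nat) (X : Ob A)
  : Hom (Mpo (i + j) X) (Mpo (i + 1 + j) X) :=
  match i return Hom (Mpo (i + j) X) (Mpo (i + 1 + j) X) with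
  | 0 => eta (Mpo j X)
  | S i => fmap M (dmor eta i j X)
  end.

Definition seq_colimit (eta : forall X, Hom X (fobj M X)) (X : Ob A)
    (L : Ob A) (inj : forall n, Hom (Mpo n X) L) : Prop :=
  (forall i j, inj (i + 1 + j) ⊚ dmor eta i j X = inj (i + j)) /\
  (forall (Y : Ob A) (f : forall n, Hom (Mpo n X) Y),
      (forall i j, f (i + 1 + j) ⊚ dmor eta i j X = f (i + j)) ->
      exists! h : Hom L Y, forall n, h ⊚ inj n = f n).

Fixpoint Mpo_shift (n : nat) (X : Ob A) : Mpo n (fobj M X) = fobj M (Mpo n X) :=
  match n return Mpo n (fobj M X) = fobj M (Mpo n X) with
  | 0 => eq_refl
  | S n => f_equal (fobj M) (Mpo_shift n X)
  end.

Fixpoint lamn (H : Endo A) (lam : forall X, Hom (fobj M (fobj H X)) (fobj H (fobj M X)))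
    (n : nat) (X : Ob A) : Hom (Mpo n (fobj H X)) (fobj H (Mpo n X)) :=
  match n return Hom (Mpo n (fobj H X)) (fobj H (Mpo n X)) with
  | 0 => idm (fobj H X)
  | S n => lam (Mpo n X) ⊚ fmap M (lamn H lam n X)
  end.

End Powers.

Definition castH {A : Category} {a b : Ob A} (e : a = b) : Hom a b :=
  match e in _ = b' return Hom a b' with eq_refl => idm a end.


(* Both composites SMH -> HMS are maps out of the colimit S(MH), so it
   suffices that they agree after precomposition with every injection
   in^n_{MH}.  On the n-th injection, naturality of in^n, the defining
   equations of lambda* and epsilon, and naturality of lambda reduce
     the left side  to  H(M in^n) . H(shift) . lambda^n M . M^n lambda,
     the right side to  H(M in^n) . lambda^(n+1) . shift,
   where shift : M^n M = M M^n is the canonical identification.  These agree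
   by the "shift law" lambda^n M . M^n lambda = lambda^(n+1) (modulo shift),
   proved by induction on n from naturality of lambda alone. *)

Lemma castH_fmap {A : Category} (F : Endo A) (a b : Ob A) (e : a = b) :
  castH (f_equal (fobj F) e) = fmap F (castH e).
Proof. destruct e; simpl. now rewrite fmap_id. Qed.

Lemma seq_colimit_ext {A : Category} (M : Endo A)
  (eta : forall X, Hom X (fobj M X)) (X L : Ob A)
  (inj : forall n, Hom (Mpo M n X) L) (Y : Ob A) (f g : Hom L Y) :
  seq_colimit M eta X L inj ->
  (forall n, f ⊚ inj n = g ⊚ inj n) -> f = g.
Proof.
  intros [cocone universal] agree.
  destruct (universal Y (fun n => g ⊚ inj n)) as [h [_ unique]].
  { intros i j. rewrite <- comp_assoc. f_equal. apply cocone. }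
  transitivity h.
  - symmetry. apply unique. exact agree.
  - apply unique. reflexivity.
Qed.

Section Distributivity.

Variables (A : Category) (H M : Endo A).
Variable lam : forall X, Hom (fobj M (fobj H X)) (fobj H (fobj M X)).
Hypothesis lam_nat : forall X Y (f : Hom X Y),
  fmap H (fmap M f) ⊚ lam X = lam Y ⊚ fmap M (fmap H f).

Lemma lamn_shift (n : nat) (X : Ob A) :
  fmap H (castH (Mpo_shift M n X)) ⊚ lamn M H lam n (fobj M X)
    ⊚ Mpm M n (lam X)
  = lamn M H lam (S n) X ⊚ castH (Mpo_shift M n (fobj H X)).
Proof.
  revert X; induction n as [|n IH]; intro X; simpl.
  - rewrite !fmap_id, !comp_id_l, !comp_id_r. reflexivity.
  - rewrite !castH_fmap, !comp_assoc, lam_nat, <- !comp_assoc, <- !fmap_comp.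
    f_equal. f_equal. rewrite <- IH, !comp_assoc. reflexivity.
Qed.

(* The colimit functor S of the chain M^n (named Sinf to keep S for the
   successor on nat). *)
Variable Sinf : Endo A.
Variable inj : forall n X, Hom (Mpo M n X) (fobj Sinf X).
Hypothesis inj_nat : forall n X Y (f : Hom X Y),
  fmap Sinf f ⊚ inj n X = inj n Y ⊚ Mpm M n f.
Variable eps : forall X, Hom (fobj Sinf (fobj M X)) (fobj M (fobj Sinf X)).
Hypothesis eps_def : forall n X,
  eps X ⊚ inj n (fobj M X) = fmap M (inj n X) ⊚ castH (Mpo_shift M n X).
Variable lamstar : forall X, Hom (fobj Sinf (fobj H X)) (fobj H (fobj Sinf X)).
Hypothesis lamstar_def : forall n X,
  lamstar X ⊚ inj n (fobj H X) = fmap H (inj n X) ⊚ lamn M H lam n X.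

Lemma left_composite_on_injection (n : nat) (X : Ob A) :
  fmap H (eps X) ⊚ lamstar (fobj M X) ⊚ fmap Sinf (lam X) ⊚ inj n (fobj M (fobj H X))
  = fmap H (fmap M (inj n X)) ⊚ fmap H (castH (Mpo_shift M n X))
    ⊚ lamn M H lam n (fobj M X) ⊚ Mpm M n (lam X).
Proof.
  rewrite <- !comp_assoc, inj_nat.
  rewrite (comp_assoc _ _ _ _ _ (lamstar _)), lamstar_def.
  rewrite !comp_assoc, <- fmap_comp, eps_def, fmap_comp.
  reflexivity.
Qed.

Lemma right_composite_on_injection (n : nat) (X : Ob A) :
  lam (fobj Sinf X) ⊚ fmap M (lamstar X) ⊚ eps (fobj H X) ⊚ inj n (fobj M (fobj H X))
  = fmap H (fmap M (inj n X)) ⊚ lamn M H lam (S n) X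
    ⊚ castH (Mpo_shift M n (fobj H X)).
Proof.
  rewrite <- !comp_assoc, eps_def.
  rewrite (comp_assoc _ _ _ _ _ (fmap M (lamstar _))), <- fmap_comp, lamstar_def.
  rewrite fmap_comp, !comp_assoc, <- lam_nat.
  simpl. rewrite !comp_assoc. reflexivity.
Qed.

End Distributivity.

Theorem mainTheorem17 (A : Category) (A_cocomplete : cocomplete A)
  (H M : Endo A)
  (eta : forall X, Hom X (fobj M X))
  (eta_nat : forall X Y (f : Hom X Y), fmap M f ⊚ eta X = eta Y ⊚ f)
  (lam : forall X, Hom (fobj M (fobj H X)) (fobj H (fobj M X)))
  (lam_nat : forall X Y (f : Hom X Y),
      fmap H (fmap M f) ⊚ lam X = lam Y ⊚ fmap M (fmap H f))
  (lam_eta : forall X, lam X ⊚ eta (fobj H X) = fmap H (eta X))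
  (S : Endo A)
  (inj : forall n X, Hom (Mpo M n X) (fobj S X))
  (inj_nat : forall n X Y (f : Hom X Y), fmap S f ⊚ inj n X = inj n Y ⊚ Mpm M n f)
  (S_colim : forall X, seq_colimit M eta X (fobj S X) (fun n => inj n X))
  (eps : forall X, Hom (fobj S (fobj M X)) (fobj M (fobj S X)))
  (eps_def : forall n X,
      eps X ⊚ inj n (fobj M X) = fmap M (inj n X) ⊚ castH (Mpo_shift M n X))
  (lamstar : forall X, Hom (fobj S (fobj H X)) (fobj H (fobj S X)))
  (lamstar_def : forall n X,
      lamstar X ⊚ inj n (fobj H X) = fmap H (inj n X) ⊚ lamn M H lam n X) :
  forall X,
    fmap H (eps X) ⊚ lamstar (fobj M X) ⊚ fmap S (lam X)
    = lam (fobj S X) ⊚ fmap M (lamstar X) ⊚ eps (fobj H X).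
Proof.
  intro X.
  apply (seq_colimit_ext M eta _ _ _ _ _ _ (S_colim (fobj M (fobj H X)))).
  intro n.
  rewrite (left_composite_on_injection A H M lam S inj inj_nat eps eps_def
             lamstar lamstar_def).
  rewrite (right_composite_on_injection A H M lam lam_nat S inj eps eps_def
             lamstar lamstar_def).
  rewrite <- !comp_assoc, <- (lamn_shift A H M lam lam_nat), !comp_assoc.
  reflexivity.
Qed.
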